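(* Let $k\in\mathbb C$ be non-algebraic and $n,m\in\mathbb Z_{>0}$. Let $E$ be an $\mathcal E$-equivalence class (with respect to $p_0=n+k^{-1}m$), with minimal element $(\lambda_m,\mu_m)$ and maximal element $(\lambda_M,\mu_M)$, and let $\nu_1,\dots,\nu_r$ be the connected components of $\lambda_M\setminus\lambda_m$. For a set of boxes $\nu$ put $g_s(\nu)=\sum_{x\in\nu}c(x,0)^{s-1}$. Then the determinant $\det\big(g_s(\nu_t)\big)_{s,t=1}^{r}$ is nonzero.
   Context: Partitions are Young diagrams (finite sets of boxes $(i,j)\in\mathbb Z^2_{>0}$, $i$ = row, $j$ = column, closed under moving up or left); a bipartition is a pair of partitions; inclusion componentwise; connected components are with respect to boxes sharing an edge. For a box $x=(i,j)$, $c(x,a)=(j-1)+k(i-1)+a$; for $\alpha=(\lambda,\mu)$, $b_r(\alpha,k,p_0)=\sum_{x\in\lambda}c(x,0)^{r-1}+(-1)^r\sum_{y\in\mu}c(y,1+k-kp_0)^{r-1}$; bipartitions are $\mathcal E$-equivalent if all $b_r(\cdot,k,n+k^{-1}m)$, $r\ge1$, coincide. Each $\mathcal E$-class has a unique minimal and maximal element with respect to inclusion. *)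

From mathcomp Require Import all_boot all_algebra finmap complex.
From mathcomp Require Import Rstruct.
Import GRing.Theory Num.Theory.
Set Implicit Arguments. Unset Strict Implicit. Unset Printing Implicit Defensive.
Local Open Scope ring_scope.
Local Open Scope fset_scope.

Definition CC : fieldType := (Rdefinitions.R)[i].

Definition non_algebraic (k : CC) : Prop :=
  forall p : {poly rat}, p != 0 -> ~~ root (map_poly ratr p) k.

(* A box (i,j): i = row, j = column, both >= 1. *)
Definition box := (nat * nat)%type.

Definition is_partition (l : {fset box}) : Prop :=
  forall x, x \in l ->
    [/\ (0 < x.1)%N, (0 < x.2)%N,
        ((1 < x.1)%N -> (x.1.-1, x.2) \in l) &
        ((1 < x.2)%N -> (x.1, x.2.-1) \in l)].

Definition bipartition := ({fset box} * {fset box})%type.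

Definition is_bipartition (a : bipartition) : Prop :=
  is_partition a.1 /\ is_partition a.2.

Definition bip_sub (a b : bipartition) : Prop :=
  (a.1 `<=` b.1) /\ (a.2 `<=` b.2).

Definition cont (k : CC) (x : box) (a : CC) : CC :=
  (x.2.-1)%:R + k * (x.1.-1)%:R + a.

Definition bfun (r : nat) (al : bipartition) (k p0 : CC) : CC :=
  \sum_(x <- al.1) cont k x 0 ^+ r.-1
  + (-1) ^+ r * \sum_(y <- al.2) cont k y (1 + k - k * p0) ^+ r.-1.

Definition Eequiv (k : CC) (n m : nat) (a b : bipartition) : Prop :=
  forall r : nat, (0 < r)%N ->
    bfun r a k (n%:R + k^-1 * m%:R) = bfun r b k (n%:R + k^-1 * m%:R).

Definition adjb (x y : box) : bool :=
  ((x.1 == y.1) && ((x.2 == y.2.+1) || (y.2 == x.2.+1))) ||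
  ((x.2 == y.2) && ((x.1 == y.1.+1) || (y.1 == x.1.+1))).

Definition is_component (D Cc : {fset box}) : Prop :=
  exists2 x, x \in Cc &
    forall y, y \in Cc <->
      (y \in D /\ exists p : seq box,
          [/\ path adjb x p, last x p = y & all (fun z => z \in D) (x :: p)]).

Definition components_list (D : {fset box}) (s : seq {fset box}) : Prop :=
  uniq s /\ forall Cc, Cc \in s <-> is_component D Cc.

Definition gfun (k : CC) (s : nat) (nu : {fset box}) : CC :=
  \sum_(x <- nu) cont k x 0 ^+ s.-1.

From mathcomp Require Import all_boot all_order all_algebra finmap complex.
From mathcomp Require Import Rstruct zify.
Import Order.TTheory GRing.Theory Num.Theory.
Set Implicit Arguments. Unset Strict Implicit. Unset Printing Implicit Defensive.
Local Open Scope ring_scope.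

(* The matrix is the evaluation at k of a matrix of rational polynomials
   (k appears through the row index of the boxes), so as k is transcendental
   it suffices that the polynomial determinant is nonzero, e.g. at 0.  There
   the t-th column lists the power sums of the column indices j - 1 of the
   boxes of nu_t; by multilinearity the determinant is a sum of Vandermonde
   determinants, one for each choice of a box in every component.  In a skew
   shape, boxes x <= y (coordinatewise) are joined by a monotone path, so
   distinct components are incomparable: they occupy disjoint columns, and
   each lies entirely on one side of every column of another.  Hence all
   these Vandermonde determinants have the same strict sign. *)

Section PowerSumMatrix.
Variables (R : comPzRingType) (T : Type) (r : nat).

Definition psum_mx (v : T -> R) (S : 'I_r -> seq T) : 'M[R]_r :=
  \matrix_(s < r, t < r) \sum_(z <- S t) v z ^+ s.

Definition set_col (S : 'I_r -> seq T) (t : 'I_r) (l : seq T) (t' : 'I_r) :=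
  if t' == t then l else S t'.

Lemma eq_psum_mx (v w : T -> R) S : v =1 w -> psum_mx v S = psum_mx w S.
Proof.
by move=> vw; apply/matrixP => s t; rewrite !mxE; apply: eq_bigr => z _; rewrite vw.
Qed.

Lemma det_psum_mx_cons v S t x l : S t = x :: l ->
  \det (psum_mx v S) =
  \det (psum_mx v (set_col S t [:: x])) + \det (psum_mx v (set_col S t l)).
Proof.
move=> St.
have cofactor_t S' : (forall t', t' != t -> S' t' = S t') ->
    forall i, cofactor (psum_mx v S') i t = cofactor (psum_mx v S) i t.
  move=> eqS i; rewrite /cofactor; congr (_ * \det _).
  by apply/matrixP => a b; rewrite !mxE eqS // eq_sym neq_lift.
rewrite (expand_det_col (psum_mx v S) t) (expand_det_col (psum_mx v (set_col S t _)) t).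
rewrite (expand_det_col (psum_mx v (set_col S t l)) t) -big_split.
apply: eq_bigr => i _ /=.
rewrite !cofactor_t => [|t'|t']; try by rewrite /set_col => /negPf ->.
by rewrite -mulrDl !mxE /set_col eqxx St big_cons big_seq1.
Qed.

End PowerSumMatrix.

Lemma map_psum_mx (R R' : comPzRingType) (T : Type) r (f : {rmorphism R -> R'})
    (v : T -> R) (S : 'I_r -> seq T) :
  map_mx f (psum_mx v S) = psum_mx (f \o v) S.
Proof.
apply/matrixP => s t; rewrite !mxE rmorph_sum.
by apply: eq_bigr => z _; rewrite rmorphXn.
Qed.

Section PowerSumDeterminantSign.
Variables (R : realFieldType) (T : eqType) (r : nat) (v : T -> R).
Variables (S : 'I_r -> seq T) (sg : 'I_r -> 'I_r -> R).
Hypothesis sgP : forall i j : 'I_r, (i < j)%N ->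
  forall x y, x \in S i -> y \in S j -> 0 < sg i j * (v y - v x).

Let eps := \prod_(i < r) \prod_(j < r | (i < j)%N) sg i j.

Lemma sg_det_psum_mx_singletons (L : 'I_r -> seq T) :
  (forall t, size (L t) = 1%N) -> (forall t, {subset L t <= S t}) ->
  0 < eps * \det (psum_mx v L).
Proof.
move=> L1 LS.
have single t : exists2 z, z \in S t & L t = [:: z].
  move: (L1 t) (LS t); case: (L t) => [|z []] //= _ zS.
  by exists z; rewrite ?zS ?mem_head.
have -> : psum_mx v L = Vandermonde r (\row_t \sum_(z <- L t) v z).
  apply/matrixP => s t; rewrite !mxE.
  by have [z _ ->] := single t; rewrite !big_seq1.
rewrite det_Vandermonde /eps -big_split; apply: prodr_gt0 => i _.
rewrite -big_split; apply: prodr_gt0 => j ij; rewrite !mxE.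
by have [x xS ->] := single i; have [y yS ->] := single j; rewrite !big_seq1 sgP.
Qed.

Lemma sg_det_psum_mx (L : 'I_r -> seq T) :
  (forall t, L t != [::]) -> (forall t, {subset L t <= S t}) ->
  0 < eps * \det (psum_mx v L).
Proof.
move: {2}(\sum_t size (L t))%N (leqnn (\sum_t size (L t))) => N.
elim: N L => [|N IHN] L sizeL L0 LS.
  apply: sg_det_psum_mx_singletons => // t; move: sizeL.
  by rewrite (bigD1 t) //=; case: (L t) (L0 t).
have [/forallP L1|/forallPn [t Lt]] := boolP [forall t, size (L t) == 1%N].
  by apply: sg_det_psum_mx_singletons => // t; apply/eqP.
have [x [y [l Ltxyl]]] : exists x y l, L t = x :: y :: l.
  by move: Lt (L0 t); case: (L t) => [|x [|y l]] //; exists x, y, l.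
have size_set l' : (size l' < size (L t))%N ->
    (\sum_t' size (set_col L t l' t') <= N)%N.
  move=> lt_l'; rewrite -ltnS (leq_trans _ sizeL) // [leqRHS](bigD1 t) //=.
  rewrite (bigD1 t) //= /set_col eqxx.
  by rewrite (eq_bigr (fun i => size (L i))) ?ltn_add2r // => i /negPf ->.
have set_col0 l' : l' != [::] -> forall t', set_col L t l' t' != [::].
  by move=> l'0 t'; rewrite /set_col; case: ifP.
have set_colS l' : {subset l' <= L t} -> forall t', {subset set_col L t l' t' <= S t'}.
  by move=> l'L t' z; rewrite /set_col; case: eqP => [-> /l'L|_]; apply: LS.
rewrite (det_psum_mx_cons _ Ltxyl) mulrDr; apply: addr_gt0; apply: IHN.
- by apply: size_set; rewrite Ltxyl.
- exact: set_col0.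
- by apply: set_colS => z; rewrite mem_seq1 Ltxyl => /eqP ->; rewrite mem_head.
- by apply: size_set; rewrite Ltxyl.
- exact: set_col0.
- by apply: set_colS => z zl; rewrite Ltxyl inE zl orbT.
Qed.

End PowerSumDeterminantSign.

Lemma det_psum_mx_neq0 (R : realFieldType) (T : eqType) r (v : T -> R)
    (S : 'I_r -> seq T) :
  (forall t, S t != [::]) ->
  (forall i j : 'I_r, (i < j)%N -> forall x x' y y',
     x \in S i -> x' \in S i -> y \in S j -> y' \in S j ->
     0 < (v y - v x) * (v y' - v x')) ->
  \det (psum_mx v S) != 0.
Proof.
move=> S0 coherent.
(* By coherence, sg i j is the common sign of v y - v x for x in S i, y in S j. *)
pose sg i j : R := if (ohead (S i), ohead (S j)) is (Some x, Some y)
  then (if v x < v y then 1 else -1) else 0.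
have sgP (i j : 'I_r) : (i < j)%N -> forall x y, x \in S i -> y \in S j ->
    0 < sg i j * (v y - v x).
  move=> ij x y; rewrite /sg.
  case Si: (S i) (S0 i) => [//|x0 li] _; case Sj: (S j) (S0 j) => [//|y0 lj] _ xi yj /=.
  have := coherent i j ij x0 x y0 y; rewrite Si Sj !mem_head xi yj.
  move=> /(_ isT isT isT isT) pos; rewrite -[v x0 < v y0]subr_gt0.
  case: (ltrgtP 0 (v y0 - v x0)) pos => [x0y0|y0x0|<-] pos.
  - by rewrite mul1r -(pmulr_rgt0 _ x0y0).
  - by rewrite mulN1r oppr_gt0 -(nmulr_rgt0 _ y0x0).
  - by rewrite mul0r ltxx in pos.
have := sg_det_psum_mx sgP S0 (fun t => @sub_refl _ _).
by apply: contraTneq => ->; rewrite mulr0 ltxx.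
Qed.

Lemma non_algebraic_det_map_neq0 (k : CC) r (A : 'M[{poly rat}]_r) :
  non_algebraic k -> \det A != 0 ->
  \det (map_mx (horner_eval k) (map_mx (map_poly ratr) A)) != 0.
Proof. by move=> kP A0; rewrite !det_map_mx; apply: kP. Qed.

Local Open Scope nat_scope.

Definition connected_in (D : {fset box}) (x y : box) := exists p : seq box,
  [/\ path adjb x p, last x p = y & all (fun z => z \in D) (x :: p)].

Lemma adjb_sym : symmetric adjb.
Proof. by move=> x y; rewrite /adjb; apply/idP/idP; lia. Qed.

Section ConnectedIn.
Variable D : {fset box}.

Lemma connected_in_refl x : x \in D -> connected_in D x x.
Proof. by move=> xD; exists [::]; rewrite /= xD. Qed.

Lemma connected_in_mem x y : connected_in D x y -> (x \in D) && (y \in D).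
Proof.
case=> p [_ <- pD]; move: (pD) => /= /andP [-> _] /=.
by move/allP: pD; apply; apply: mem_last.
Qed.

Lemma connected_in_trans y x z :
  connected_in D x y -> connected_in D y z -> connected_in D x z.
Proof.
case=> p [xp px pD] [q [yq qy qD]]; exists (p ++ q); split.
- by rewrite cat_path xp px.
- by rewrite last_cat px.
- by rewrite -cat_cons all_cat pD; case/andP: qD.
Qed.

Lemma connected_in_adj x y : x \in D -> y \in D -> adjb x y -> connected_in D x y.
Proof. by move=> xD yD xy; exists [:: y]; rewrite /= xD yD xy. Qed.

Lemma connected_in_sym x y : connected_in D x y -> connected_in D y x.
Proof.
case=> p; elim: p x => [|z p IHp] x [/= xp px pD].
  by rewrite -px; apply: connected_in_refl; case/andP: pD.
case/andP: xp => xz zp; case/andP: pD => xD zpD.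
apply: (connected_in_trans (IHp z _)); first by split.
by apply: connected_in_adj => //; [case/andP: zpD | rewrite adjb_sym].
Qed.

Lemma connected_in_path x p : path adjb x p -> all (fun z => z \in D) (x :: p) ->
  forall z, z \in x :: p -> connected_in D x z.
Proof.
elim: p x => [|y p IHp] x /=.
  by move=> _ /andP [xD _] z; rewrite mem_seq1 => /eqP ->; apply: connected_in_refl.
move=> /andP [xy yp] /andP [xD ypD] z; rewrite inE => /predU1P [->|zp].
  exact: connected_in_refl.
apply: (connected_in_trans (y := y)).
  by apply: connected_in_adj => //; case/andP: ypD.
by apply: IHp; rewrite // inE zp orbT.
Qed.

End ConnectedIn.

Lemma path_col_lt c x p : path adjb x p -> all (fun z => z.2 != c) (x :: p) ->
  (x.2 < c) = ((last x p).2 < c).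
Proof.
elim: p x => [|y p IHp] x //= /andP [xy yp] /andP [xc ypc].
rewrite -IHp //; case/andP: ypc => yc _; move: xy xc yc.
by rewrite /adjb => xy xc yc; apply/idP/idP; lia.
Qed.

Section Components.
Variables (D C : {fset box}).
Hypothesis CD : is_component D C.

Lemma componentP :
  exists2 x, x \in C & forall y, y \in C <-> connected_in D x y.
Proof.
case: CD => x xC CP; exists x => // y; split => [/CP [_ xy] //|xy].
by apply/CP; split => //; case/andP: (connected_in_mem xy).
Qed.

Lemma component_sub x : x \in C -> x \in D.
Proof. by case: CD => x0 _ CP /CP []. Qed.

Lemma component_connected x y : x \in C -> y \in C -> connected_in D x y.
Proof.
have [x0 _ CP] := componentP => /CP x0x /CP x0y.
exact: connected_in_trans (connected_in_sym x0x) x0y.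
Qed.

Lemma component_closed x y : x \in C -> connected_in D x y -> y \in C.
Proof.
have [x0 x0C CP] := componentP => xC xy.
exact/CP/(connected_in_trans _ xy)/component_connected.
Qed.

Lemma component_col_lt c x x' : (forall z, z \in C -> z.2 != c) ->
  x \in C -> x' \in C -> (x.2 < c) = (x'.2 < c).
Proof.
move=> Cc xC x'C; have [p [xp <- pD]] := component_connected xC x'C.
apply: path_col_lt => //; apply/allP => z zp.
exact/Cc/(component_closed xC)/(connected_in_path xp pD).
Qed.

End Components.

Lemma components_eq D C1 C2 x : is_component D C1 -> is_component D C2 ->
  x \in C1 -> x \in C2 -> C1 = C2.
Proof.
move=> C1D C2D xC1 xC2; apply/fsetP => y; apply/idP/idP => yC.
  exact: (component_closed C2D xC2 (component_connected C1D xC1 yC)).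
exact: (component_closed C1D xC1 (component_connected C2D xC2 yC)).
Qed.

Lemma partition_down l x y : is_partition l -> y \in l ->
  0 < x.1 -> 0 < x.2 -> x.1 <= y.1 -> x.2 <= y.2 -> x \in l.
Proof.
case: x y => a b [c d] lP /=.
move: {2}(c - a + (d - b)) (erefl (c - a + (d - b))) => e.
elim: e c d => [|e IHe] c d de cdl a0 b0 ac bd.
  by have [-> ->] : a = c /\ b = d by lia.
have [/= c0 d0 up left] := lP _ cdl.
case: (ltnP a c) => ac'.
  by apply: (IHe c.-1 d); try lia; apply: up; lia.
by apply: (IHe c d.-1); try lia; apply: left; lia.
Qed.

Section SkewShape.
Variables lM lm : {fset box}.
Hypotheses (lMP : is_partition lM) (lmP : is_partition lm).
Local Notation D := (lM `\` lm)%fset.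

Lemma skew_col_gt0 x : x \in D -> 0 < x.2.
Proof. by rewrite in_fsetD => /andP [_ /lMP []]. Qed.

Lemma skew_between x y z : x \in D -> y \in D ->
  x.1 <= z.1 -> x.2 <= z.2 -> z.1 <= y.1 -> z.2 <= y.2 -> z \in D.
Proof.
rewrite !in_fsetD => /andP [xlm xlM] /andP [_ ylM] xz1 xz2 zy1 zy2.
have [x1 x2 _ _] := lMP xlM.
rewrite (partition_down lMP ylM) ?andbT //; try lia.
by apply: contra xlm => zlm; apply: (partition_down lmP zlm).
Qed.

(* A monotone staircase from x to y stays in the rectangle [x, y], hence in D. *)
Lemma skew_connected x y : x \in D -> y \in D ->
  x.1 <= y.1 -> x.2 <= y.2 -> connected_in D x y.
Proof.
case: x y => a b [c d] /=.
move: {2}(c - a + (d - b)) (erefl (c - a + (d - b))) => e.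
elim: e a b => [|e IHe] a b de abD cdD ac bd.
  have [-> ->] : a = c /\ b = d by lia.
  exact: connected_in_refl.
have [next next_adj next_le] : exists2 z : box, adjb (a, b) z &
    [/\ a <= z.1, b <= z.2, z.1 <= c, z.2 <= d & c - z.1 + (d - z.2) = e].
  by case: (ltnP a c) => ac'; [exists (a.+1, b) | exists (a, b.+1)];
    rewrite /adjb /=; try split; lia.
case: next next_adj next_le => a' b' abz [/= aa' bb' a'c b'd de'].
have zD : (a', b') \in D by apply: (skew_between abD cdD) => /=.
apply: (connected_in_trans (connected_in_adj abD zD abz)).
exact: IHe.
Qed.

Lemma skew_components_incomparable C1 C2 x y :
  is_component D C1 -> is_component D C2 -> C1 != C2 ->
  x \in C1 -> y \in C2 -> ~~ ((x.1 <= y.1) && (x.2 <= y.2)).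
Proof.
move=> C1D C2D C12 xC1 yC2; apply/negP => /andP [xy1 xy2].
have xy := skew_connected (component_sub C1D xC1) (component_sub C2D yC2) xy1 xy2.
by move/eqP: C12; apply; apply: components_eq C1D C2D (component_closed C1D xC1 xy) yC2.
Qed.

Lemma skew_components_col_neq C1 C2 x y :
  is_component D C1 -> is_component D C2 -> C1 != C2 ->
  x \in C1 -> y \in C2 -> x.2 != y.2.
Proof.
move=> C1D C2D C12 xC1 yC2.
have := skew_components_incomparable C1D C2D C12 xC1 yC2.
rewrite eq_sym in C12; have := skew_components_incomparable C2D C1D C12 yC2 xC1.
lia.
Qed.

Lemma skew_components_col_lt C1 C2 x x' y y' :
  is_component D C1 -> is_component D C2 -> C1 != C2 ->
  x \in C1 -> x' \in C1 -> y \in C2 -> y' \in C2 ->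
  (x.2 < y.2) = (x'.2 < y'.2).
Proof.
move=> C1D C2D C12 xC1 x'C1 yC2 y'C2.
have col_neq := skew_components_col_neq C1D C2D C12.
have -> : (x.2 < y.2) = (x'.2 < y.2).
  by apply: (component_col_lt C1D) => // z zC1; apply: col_neq.
have : (y.2 < x'.2) = (y'.2 < x'.2).
  by apply: (component_col_lt C2D) => // z zC2; rewrite eq_sym; apply: col_neq.
have := col_neq _ _ x'C1 yC2; have := col_neq _ _ x'C1 y'C2; lia.
Qed.

Lemma skew_components_coherent {R : realDomainType} C1 C2 x x' y y' :
  is_component D C1 -> is_component D C2 -> C1 != C2 ->
  x \in C1 -> x' \in C1 -> y \in C2 -> y' \in C2 ->
  (0 < ((y.2.-1)%:R - (x.2.-1)%:R) * ((y'.2.-1)%:R - (x'.2.-1)%:R) :> R)%R.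
Proof.
move=> C1D C2D C12 xC1 x'C1 yC2 y'C2.
have := skew_components_col_lt C1D C2D C12 xC1 x'C1 yC2 y'C2.
have := skew_components_col_neq C1D C2D C12 xC1 yC2.
have := skew_components_col_neq C1D C2D C12 x'C1 y'C2.
have col_gt0 C z : is_component D C -> z \in C -> 0 < z.2.
  by move=> CD zC; apply/skew_col_gt0/(component_sub CD).
have := col_gt0 _ _ C1D xC1; have := col_gt0 _ _ C1D x'C1.
have := col_gt0 _ _ C2D yC2; have := col_gt0 _ _ C2D y'C2.
case: (ltngtP x.2 y.2) => xy // *.
- by rewrite mulr_gt0 // subr_gt0 ltr_nat; lia.
- by rewrite nmulr_rgt0 // subr_lt0 ltr_nat; lia.
Qed.

Lemma skew_components_list_det_neq0 nu : components_list D nu ->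
  (\det (psum_mx (fun x : box => (x.2.-1)%:R : rat)
                 (fun t : 'I_(size nu) => nth fset0 nu t)) != 0)%R.
Proof.
move=> [nu_uniq nuP].
have nu_comp (t : 'I_(size nu)) := (nuP _).1 (mem_nth fset0 (ltn_ord t)).
apply: det_psum_mx_neq0 => [t|i j ij x x' y y' xi x'i yj y'j].
  have [x0 x0C _] := componentP (nu_comp t).
  apply/eqP => nu_t0.
  by rewrite -[x0 \in _]/(x0 \in (nth fset0 nu t : seq box)) nu_t0 in x0C.
apply: (skew_components_coherent (nu_comp i) (nu_comp j)) => //.
by rewrite nth_uniq // neq_ltn ij.
Qed.

End SkewShape.

Local Open Scope ring_scope.
Local Open Scope fset_scope.

Theorem mainTheorem12 (k : CC) (n m : nat) (amin aMax : bipartition)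
  (nu : seq {fset box}) :
  non_algebraic k -> (0 < n)%N -> (0 < m)%N ->
  is_bipartition amin -> is_bipartition aMax ->
  Eequiv k n m aMax amin ->
  (forall b : bipartition, is_bipartition b -> Eequiv k n m b amin ->
     bip_sub amin b /\ bip_sub b aMax) ->
  components_list (aMax.1 `\` amin.1) nu ->
  \det (\matrix_(s < size nu, t < size nu) gfun k s.+1 (nth fset0 nu t)) != 0.
Proof.
move=> kP _ _ [lmP _] [lMP _] _ _ nuP.
pose S (t : 'I_(size nu)) : seq box := nth fset0 nu t.
pose c (x : box) : {poly rat} := ((x.2.-1)%:R + 'X * (x.1.-1)%:R)%R.
have -> : \matrix_(s < size nu, t < size nu) gfun k s.+1 (nth fset0 nu t)
    = map_mx (horner_eval k) (map_mx (map_poly ratr) (psum_mx c S)).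
  rewrite !map_psum_mx; apply/matrixP => s t; rewrite !mxE; apply: eq_bigr => x _.
  rewrite /= rmorphD rmorphM /= map_polyX !rmorph_nat horner_evalE.
  by rewrite !hornerE !hornerMn !hornerE /cont addr0.
apply: non_algebraic_det_map_neq0 kP _.
have c_at0 : (\det (psum_mx c S)).[0] = \det (psum_mx (fun x => (x.2.-1)%:R) S).
  rewrite -horner_evalE -det_map_mx map_psum_mx; congr (\det _).
  by apply: eq_psum_mx => x; rewrite /= horner_evalE !hornerE !hornerMn !hornerE.
have := skew_components_list_det_neq0 lMP lmP nuP; apply: contra_neq.
by rewrite -c_at0 => ->; rewrite horner0.
Qed.
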